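(* Let $Q$ be a quasi-array of size $m$, let $\sigma$ be a composition of $m$, let $k\in\{1,\dots,m\}$, and let $T=\pi_\sigma(Q)$. Suppose the $k$-th diagonal of $Q$ meets $T$ in a cell containing the entry $\ell$. Then: (1) $C_k$ is defined on $Q$ if and only if $e_{\ell-1}$ is defined on $T$ and changes the symbol $\ell$ lying in the cell of $T$ on the $k$-th diagonal; in this case $e_{\ell-1}(T)=\pi_\sigma(C_k(Q))$. (2) $D_k$ is defined on $Q$ if and only if $f_{\ell}$ is defined on $T$ and changes the symbol $\ell$ lying in the cell of $T$ on the $k$-th diagonal; in this case $f_{\ell}(T)=\pi_\sigma(D_k(Q))$.
   Context: Entries are positive integers; rows are indexed top to bottom, columns left to right. A quasi-array of size $m$ is an array $Q$ with cells $(i,j)$, $1\le i\le m$, $1\le j\le m-i+1$, each containing a positive integer $Q_{(i,j)}$, such that $Q_{(1,j)}\le Q_{(1,j+1)}$ and $Q_{(i,j)}=Q_{(1,i+j-1)}+i-1$ for all cells. The $k$-th diagonal is the set of cells $(i,j)$ with $i+j-1=k$. Operators: $D_m$ is always defined on $Q$ of size $m$ and adds $1$ to every entry of the $m$-th diagonal; for $1\le k\le m-1$, $D_k$ is defined iff $Q_{(1,k)}<Q_{(1,k+1)}$, and then adds $1$ to all entries of the $k$-th diagonal; for $2\le k\le m$, $C_k$ is defined iff $Q_{(1,k)}>Q_{(1,k-1)}$, and then subtracts $1$ from all entries of the $k$-th diagonal; $C_1$ is defined iff $Q_{(1,1)}>1$, and then subtracts $1$ from $Q_{(1,1)}$. A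 quasi-ribbon diagram of shape $\sigma=(\sigma_1,\dots,\sigma_r)$ (a composition) has $\sigma_i$ cells in row $i$, with the leftmost cell of row $i+1$ directly below the rightmost cell of row $i$. A quasi-ribbon tableau is a filling of such a diagram with positive integers, weakly increasing along rows and strictly increasing down columns. For $\sigma$ a composition of $m$, $\pi_\sigma(Q)$ is the quasi-ribbon tableau obtained by taking the cells of $Q$ forming a quasi-ribbon diagram of shape $\sigma$ whose first cell is $(1,1)$ (so its cells lie one on each of the diagonals $1,\dots,m$), with the entries of $Q$. The column reading of a quasi-ribbon tableau is the word obtained by reading columns left to right, each column bottom to top; operators on tableaux act via their column readings, each letter of the word corresponding to a cell. Quasi-Kashiwara operators on a word $u$ over the positive integers, for $i\ge1$: if $u$ contains a (not necessarily consecutive) subsequence $(i+1)\,i$, both $e_i(u)$ and $f_i(u)$ are undefined; otherwise $e_i(u)$ is obtained by replacing the leftmost $i+1$ by $i$ (undefined if $u$ has no $i+1$), and $f_i(u)$ is obtained by replacing the rightmost $i$ by $i+1$ (undefined if $u$ has no $i$). $e_0$ is undefined. *)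

From mathcomp Require Import all_boot.
Set Implicit Arguments. Unset Strict Implicit. Unset Printing Implicit Defensive.

(* Arrays are functions (row index i, column index j) -> entry, 1-based;
   only the cells (i,j), 1 <= i <= m, 1 <= j <= m-i+1 matter. *)

Definition is_quasi_array (m : nat) (Q : nat -> nat -> nat) : Prop :=
  (forall i j, 1 <= i -> 1 <= j -> i + j <= m.+1 ->
      0 < Q i j /\ Q i j = Q 1 (i + j - 1) + (i - 1))
  /\ (forall j, 1 <= j -> j < m -> Q 1 j <= Q 1 j.+1).

Definition on_diag (k i j : nat) : bool := i + j == k.+1.

Definition D_op (k : nat) (Q : nat -> nat -> nat) : nat -> nat -> nat :=
  fun i j => if on_diag k i j then Q i j + 1 else Q i j.
Definition C_op (k : nat) (Q : nat -> nat -> nat) : nat -> nat -> nat :=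
  fun i j => if on_diag k i j then Q i j - 1 else Q i j.

Definition D_defined (m k : nat) (Q : nat -> nat -> nat) : Prop :=
  if k == m then True else Q 1 k < Q 1 k.+1.
Definition C_defined (k : nat) (Q : nat -> nat -> nat) : Prop :=
  if k == 1 then 1 < Q 1 1 else Q 1 k.-1 < Q 1 k.

Definition is_composition (m : nat) (sigma : seq nat) : bool :=
  all (fun s => 0 < s) sigma && (sumn sigma == m).

(* Cells of the quasi-ribbon diagram of shape sigma whose first cell is (r,c),
   listed row by row (left to right); the first cell of row i+1 is directly
   below the last cell of row i. *)
Fixpoint ribbon_cells_from (r c : nat) (sigma : seq nat) : seq (nat * nat) :=
  match sigma with
  | [::] => [::]
  | s :: sigma' =>
      [seq (r, c + t) | t <- iota 0 s] ++ ribbon_cells_from r.+1 (c + s - 1) sigma'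
  end.
Definition ribbon_cells (sigma : seq nat) := ribbon_cells_from 1 1 sigma.

(* Column reading order of the cells: columns left to right, each column
   bottom to top. *)
Definition col_reading_cells (sigma : seq nat) : seq (nat * nat) :=
  flatten [seq [seq x <- rev (ribbon_cells sigma) | x.2 == col]
          | col <- iota 1 (sumn sigma)].

Record qr_tableau := QRTableau { qr_shape : seq nat; qr_fill : nat * nat -> nat }.

Definition is_qr_tableau (T : qr_tableau) : Prop :=
  let cs := ribbon_cells (qr_shape T) in
  (forall x, x \in cs -> 0 < qr_fill T x) /\
  (forall x, x \in cs -> (x.1, x.2.+1) \in cs -> qr_fill T x <= qr_fill T (x.1, x.2.+1)) /\
  (forall x, x \in cs -> (x.1.+1, x.2) \in cs -> qr_fill T x < qr_fill T (x.1.+1, x.2)).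

Definition col_reading (T : qr_tableau) : seq nat :=
  [seq qr_fill T x | x <- col_reading_cells (qr_shape T)].

(* pi_sigma(Q): the cells of Q forming the quasi-ribbon diagram of shape sigma
   with first cell (1,1), with the entries of Q. *)
Definition pi_sigma (sigma : seq nat) (Q : nat -> nat -> nat) : qr_tableau :=
  QRTableau sigma (fun x => Q x.1 x.2).

Definition qk_blocked (i : nat) (u : seq nat) : bool := subseq [:: i.+1; i] u.

(* position (0-based) of the leftmost i+1, resp. the rightmost i *)
Definition e_pos (i : nat) (u : seq nat) : nat := index i.+1 u.
Definition f_pos (i : nat) (u : seq nat) : nat := (size u).-1 - index i (rev u).

Definition e_op (i : nat) (u : seq nat) : option (seq nat) :=
  if (i == 0) || qk_blocked i u || (i.+1 \notin u) then None
  else Some (set_nth 0 u (e_pos i u) i).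

Definition f_op (i : nat) (u : seq nat) : option (seq nat) :=
  if (i == 0) || qk_blocked i u || (i \notin u) then None
  else Some (set_nth 0 u (f_pos i u) i.+1).

Definition is_some {A} (o : option A) : bool := if o is Some _ then true else false.

From mathcomp Require Import all_boot zify.
Set Implicit Arguments. Unset Strict Implicit. Unset Printing Implicit Defensive.

(* Along a ribbon the cells advance by one diagonal at each step, so any two
   ribbon cells are comparable componentwise, and the entry of Q in a cell
   (i, j) is Q 1 (i + j - 1) + (i - 1): entries grow weakly to the right and
   strictly downwards, by at least the row difference.  If C_k is defined,
   i.e. Q 1 (k - 1) < Q 1 k, this growth is strict across the k-th diagonal,
   so the cell c of the ribbon on that diagonal carries the first l of the
   column reading and no l is read before an l - 1; symmetrically for D_k,
   with the last l and the pair l + 1, l.  Conversely, if Q 1 (k - 1) = Q 1 k,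
   the ribbon cell on diagonal k - 1 is either left of c and also carries l,
   or above c and carries l - 1, which is then read after the l of c; the
   case of D_k is the mirror image with the ribbon cell on diagonal k + 1. *)

Lemma sorted_index_ltn (T : eqType) (r : rel T) (s : seq T) :
  transitive r -> irreflexive r -> sorted r s ->
  {in s &, forall x y, (index x s < index y s) = r x y}.
Proof.
move=> r_trans r_irr s_sorted x y xs ys; apply/idP/idP; first exact: sorted_ltn_index.
move=> rxy; rewrite ltnNge leq_eqVlt; apply/negP => /orP[/eqP/index_inj yx|].
  by move: rxy; rewrite yx ?r_irr.
by move/(sorted_ltn_index r_trans s_sorted _ _ ys xs)/(r_trans _ _ _ rxy); rewrite r_irr.
Qed.

Section Words.
Variables (T S : eqType) (f : T -> S).

Lemma subseq_pair_map (s : seq T) a b : uniq s ->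
  subseq [:: a; b] (map f s) <->
  exists x y, [/\ x \in s, y \in s, index x s < index y s, f x = a & f y = b].
Proof.
elim: s => [|z s IH] /=; first by split=> // -[x [y []]].
case/andP=> zNs s_uniq; have memNz y : y \in s -> z != y.
  by apply: contraTneq => <-.
have [->|Naz] := eqVneq a (f z).
  rewrite sub1seq; split=> [/mapP[y ys ->]|[x [y [_]]]].
    by exists z, y; rewrite !inE eqxx ys orbT /= (negbTE (memNz y ys)).
  rewrite inE /=; case: eqVneq => [<-|_ /= ys _ _ <-] //; exact: map_f.
rewrite IH //; split=> -[x [y [xs ys xy fx fy]]].
  exists x, y; rewrite !inE xs ys !orbT /= (negbTE (memNz x xs)).
  by rewrite (negbTE (memNz y ys)).
have zx : z != x by apply: contra_neq Naz => zx; rewrite -fx zx.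
move: xs ys xy; rewrite !inE /= eq_sym (negbTE zx) /=.
by case: eqVneq => //= _ xs ys xy; exists x, y.
Qed.

Lemma index_map_eq (s : seq T) x : x \in s ->
  index (f x) (map f s) = index x s <->
  {in s, forall y, index y s < index x s -> f y != f x}.
Proof.
move=> xs; set P := preim f (pred1 (f x)).
have -> : index (f x) (map f s) = find P s by rewrite /index find_map.
have Ps : has P s by apply/hasP; exists x; rewrite /P /=.
have le_find : find P s <= index x s.
  by rewrite -ltnS -has_take //; apply/hasP; exists x; rewrite ?in_take /P /=.
split=> [find_x y ys lt_yx|before_x].
  apply/negP => /eqP fy; have : has P (take (index x s) s).
    by apply/hasP; exists y; rewrite ?in_take /P //= fy.
  by rewrite has_take // find_x ltnn.
apply/eqP; rewrite eqn_leq le_find leqNgt -has_take //; apply/hasPn => y yt.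
have ys := mem_take yt; rewrite in_take // in yt.
by rewrite /P /= before_x.
Qed.

Lemma index_rev (s : seq T) x : uniq s -> x \in s ->
  index x (rev s) = size s - (index x s).+1.
Proof.
move=> s_uniq xs; have := index_mem x s; rewrite xs => lt_xs.
rewrite -[in LHS](nth_index x xs).
rewrite [in LHS](_ : index x s = size s - (size s - (index x s).+1).+1); last lia.
by rewrite -nth_rev ?index_uniq ?size_rev ?rev_uniq //; lia.
Qed.

Lemma last_index_map_eq (s : seq T) x : uniq s -> x \in s ->
  (size (map f s)).-1 - index (f x) (rev (map f s)) = index x s <->
  {in s, forall y, index x s < index y s -> f y != f x}.
Proof.
move=> s_uniq xs; rewrite -map_rev size_map.
have x_rev : x \in rev s by rewrite mem_rev.
have lt_xs : index x s < size s by rewrite index_mem.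
have : index (f x) (map f (rev s)) < size s.
  by rewrite -(size_rev s) -(size_map f) index_mem map_f.
move=> lt_fx; transitivity (index (f x) (map f (rev s)) = index x (rev s)).
  by rewrite index_rev //; split=> E; lia.
rewrite index_map_eq //; split=> before_x y; rewrite ?mem_rev => ys lt_xy.
  apply: before_x; rewrite ?mem_rev // !index_rev //.
  by have := index_mem y s; rewrite ys; lia.
apply: before_x => //; move: lt_xy; rewrite !index_rev //.
by have := index_mem y s; rewrite ys; lia.
Qed.

Lemma set_nth_index_map (s : seq T) x (x0 v : S) : uniq s -> x \in s ->
  set_nth x0 (map f s) (index x s) v = [seq if y == x then v else f y | y <- s].
Proof.
elim: s => [|z s IH] //= /andP[zNs s_uniq].
have [<- _|zx] := eqVneq z x; last by rewrite inE eq_sym (negbTE zx) /= => xs; rewrite IH.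
congr cons; apply/eq_in_map => y ys; case: eqVneq => // yz.
by move: zNs; rewrite -yz ys.
Qed.

End Words.

Definition cell_le (x y : nat * nat) : bool := (x.1 <= y.1) && (x.2 <= y.2).

Definition read_before (x y : nat * nat) : bool :=
  (x.2 < y.2) || (x.2 == y.2) && (y.1 < x.1).

Definition qa_cell (m : nat) (x : nat * nat) : bool :=
  [&& 0 < x.1, 0 < x.2 & x.1 + x.2 <= m.+1].

Lemma read_before_trans : transitive read_before.
Proof. by move=> y x z; rewrite /read_before; lia. Qed.

Lemma read_before_irr : irreflexive read_before.
Proof. by move=> x; rewrite /read_before; lia. Qed.

Lemma ribbon_cells_from_diag r c sigma : 0 < c -> all (fun s => 0 < s) sigma ->
  [seq x.1 + x.2 | x <- ribbon_cells_from r c sigma] = iota (r + c) (sumn sigma).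
Proof.
elim: sigma r c => [|s sigma IH] r c c_gt0 //= /andP[s_gt0 sigma_pos].
rewrite map_cat -map_comp IH // ?iotaD; last lia.
congr (_ ++ _); last by congr iota; lia.
by rewrite -[r + c]addn0 iotaDl; apply: eq_map => t /=; lia.
Qed.

Lemma ribbon_cells_from_ge r c sigma : all (fun s => 0 < s) sigma ->
  {in ribbon_cells_from r c sigma, forall x, cell_le (r, c) x}.
Proof.
elim: sigma r c => [|s sigma IH] r c //= /andP[s_gt0 sigma_pos] x.
by rewrite mem_cat => /orP[/mapP[t _ ->]|/(IH _ _ sigma_pos)]; rewrite /cell_le /=; lia.
Qed.

Lemma ribbon_cells_from_chain r c sigma : all (fun s => 0 < s) sigma ->
  {in ribbon_cells_from r c sigma &, forall x y, cell_le x y || cell_le y x}.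
Proof.
elim: sigma r c => [|s sigma IH] r c //= /andP[s_gt0 sigma_pos] x y.
rewrite !mem_cat => /orP[/mapP[t t_s ->]|xL] /orP[/mapP[t' t'_s ->]|yL].
- by move: t_s t'_s; rewrite !mem_iota /cell_le /=; lia.
- have := ribbon_cells_from_ge sigma_pos yL.
  by move: t_s; rewrite mem_iota /cell_le /=; lia.
- have := ribbon_cells_from_ge sigma_pos xL.
  by move: t'_s; rewrite mem_iota /cell_le /=; lia.
- exact: IH _ _ sigma_pos _ _ xL yL.
Qed.

Section Ribbon.
Variables (m : nat) (sigma : seq nat).
Hypothesis sigma_comp : is_composition m sigma.

Let sigma_pos : all (fun s => 0 < s) sigma := proj1 (andP sigma_comp).
Let sumn_sigma : sumn sigma = m := eqP (proj2 (andP sigma_comp)).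

Lemma ribbon_cells_diag : [seq x.1 + x.2 | x <- ribbon_cells sigma] = iota 2 m.
Proof. by rewrite ribbon_cells_from_diag // sumn_sigma. Qed.

Lemma ribbon_cells_qa_cell : {in ribbon_cells sigma, forall x, qa_cell m x}.
Proof.
move=> x xL; have := ribbon_cells_from_ge sigma_pos xL.
have : x.1 + x.2 \in iota 2 m.
  by rewrite -ribbon_cells_diag (map_f (fun y : nat * nat => y.1 + y.2)).
by rewrite mem_iota /qa_cell /cell_le /=; lia.
Qed.

Lemma ribbon_cells_le : {in ribbon_cells sigma &, forall x y,
  cell_le x y = (x.1 + x.2 <= y.1 + y.2)}.
Proof.
move=> x y xL yL; have := ribbon_cells_from_chain sigma_pos xL yL.
by rewrite /cell_le; lia.
Qed.

Lemma ribbon_cells_on_diag d : 0 < d <= m ->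
  exists2 x, x \in ribbon_cells sigma & on_diag d x.1 x.2.
Proof.
move=> d_range; have : d.+1 \in iota 2 m by rewrite mem_iota; lia.
by rewrite -ribbon_cells_diag => /mapP[x xL dx]; exists x; rewrite // /on_diag dx.
Qed.

Lemma ribbon_cells_diag_inj : {in ribbon_cells sigma &, forall x y,
  x.1 + x.2 = y.1 + y.2 -> x = y}.
Proof.
move=> [i j] [i' j'] xL yL /= diag_eq.
have := ribbon_cells_le xL yL; have := ribbon_cells_le yL xL.
by rewrite /cell_le /= diag_eq leqnn => /andP[? ?] /andP[? ?]; congr pair; lia.
Qed.

Lemma mem_col_reading_cells : col_reading_cells sigma =i ribbon_cells sigma.
Proof.
move=> y; apply/flatten_mapP/idP => [[col _]|yL].
  by rewrite mem_filter mem_rev => /andP[_ ->].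
exists y.2; last by rewrite mem_filter mem_rev eqxx.
rewrite mem_iota sumn_sigma; move: (ribbon_cells_qa_cell yL).
by case: y {yL} => i j; rewrite /qa_cell /=; lia.
Qed.

Lemma col_reading_cells_sorted : sorted read_before (col_reading_cells sigma).
Proof.
(* Diagonals increase along the ribbon, so each column is listed top to
   bottom; reversing the ribbon yields the bottom-to-top order of the reading. *)
have diag_sorted :
    sorted (fun x y => y.1 + y.2 < x.1 + x.2) (rev (ribbon_cells sigma)).
  have := iota_ltn_sorted 2 m; rewrite -ribbon_cells_diag sorted_map rev_sorted.
  exact.
have diag_trans : transitive (fun x y : nat * nat => y.1 + y.2 < x.1 + x.2).
  by move=> y x z; lia.
rewrite sorted_pairwise; last exact: read_before_trans.
rewrite /col_reading_cells; elim: (sumn sigma) 1 => [|n IH] col //=.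
rewrite pairwise_cat IH andbT; apply/andP; split.
  apply/allrelP => x y; rewrite mem_filter => /andP[/eqP x_col _].
  case/flatten_mapP => col'; rewrite mem_iota mem_filter => ? /andP[/eqP y_col _].
  by rewrite /read_before; lia.
have := sorted_filter diag_trans (fun x => x.2 == col) diag_sorted.
rewrite sorted_pairwise //.
apply: (sub_in_pairwise (P := fun x => x.2 == col)); last first.
  by apply/allP => x; rewrite mem_filter => /andP[].
by move=> [i j] [i' j'] /eqP/= -> /eqP/= ->; rewrite /read_before /=; lia.
Qed.

Lemma col_reading_cells_uniq : uniq (col_reading_cells sigma).
Proof.
exact: sorted_uniq read_before_trans read_before_irr _ col_reading_cells_sorted.
Qed.

Lemma index_col_reading_cells : {in ribbon_cells sigma &, forall x y,
  (index x (col_reading_cells sigma) < index y (col_reading_cells sigma))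
  = read_before x y}.
Proof.
move=> x y xL yL; apply: sorted_index_ltn; rewrite ?mem_col_reading_cells //.
- exact: read_before_trans.
- exact: read_before_irr.
- exact: col_reading_cells_sorted.
Qed.

End Ribbon.

Section QuasiArray.
Variables (m : nat) (Q : nat -> nat -> nat).
Hypothesis Q_qa : is_quasi_array m Q.

Lemma qa_entry d x : qa_cell m x -> on_diag d x.1 x.2 ->
  Q x.1 x.2 = Q 1 d + (x.1 - 1).
Proof.
case: x => i j /and3P[i_gt0 j_gt0 ij_le] /eqP /= dE.
by have [_ ->] := Q_qa.1 i j i_gt0 j_gt0 ij_le; congr (Q 1 _ + _); lia.
Qed.

Lemma qa_entry_gt0 x : qa_cell m x -> 0 < Q x.1 x.2.
Proof. by case/and3P=> *; have [] := Q_qa.1 x.1 x.2. Qed.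

Lemma qa_top_row_mono d d' : 0 < d -> d <= d' -> d' <= m -> Q 1 d <= Q 1 d'.
Proof.
move=> d_gt0 le_dd' d'_le.
apply: (homo_leq_in (D := [pred d | 0 < d <= m]) (r := leq)) => //.
- exact: leq_trans.
- by move=> i j; rewrite !inE => ? ? k; rewrite inE; lia.
- by move=> i; rewrite !inE => ? ?; apply: Q_qa.2; lia.
- by rewrite inE; lia.
- by rewrite inE; lia.
Qed.

Lemma qa_cell_on_diag x : qa_cell m x -> on_diag (x.1 + x.2 - 1) x.1 x.2.
Proof. by rewrite /qa_cell /on_diag; lia. Qed.

Lemma qa_gap x y : qa_cell m x -> qa_cell m y -> cell_le y x ->
  Q y.1 y.2 + (x.1 - y.1) <= Q x.1 x.2.
Proof.
move=> xQ yQ yx; rewrite (qa_entry xQ (qa_cell_on_diag xQ)).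
rewrite (qa_entry yQ (qa_cell_on_diag yQ)).
have := @qa_top_row_mono (y.1 + y.2 - 1) (x.1 + x.2 - 1).
by move: xQ yQ yx; rewrite /qa_cell /cell_le; lia.
Qed.

Lemma C_defined_gap k x y : C_defined k Q -> on_diag k x.1 x.2 ->
  qa_cell m x -> qa_cell m y -> cell_le y x -> y.1 + y.2 < x.1 + x.2 ->
  Q y.1 y.2 + (x.1 - y.1) < Q x.1 x.2.
Proof.
move=> Ck xk xQ yQ yx lt_yx.
have k_gt1 : 1 < k by move: xk yQ lt_yx; rewrite /on_diag /qa_cell; lia.
move: Ck; rewrite /C_defined gtn_eqF // (qa_entry xQ xk).
rewrite (qa_entry yQ (qa_cell_on_diag yQ)).
have := @qa_top_row_mono (y.1 + y.2 - 1) k.-1.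
by move: xk xQ yQ yx lt_yx; rewrite /on_diag /qa_cell /cell_le; lia.
Qed.

Lemma D_defined_gap k x y : D_defined m k Q -> on_diag k x.1 x.2 ->
  qa_cell m x -> qa_cell m y -> cell_le x y -> x.1 + x.2 < y.1 + y.2 ->
  Q x.1 x.2 + (y.1 - x.1) < Q y.1 y.2.
Proof.
move=> Dk xk xQ yQ xy lt_xy.
have k_lt : k < m by move: xk yQ lt_xy; rewrite /on_diag /qa_cell; lia.
move: Dk; rewrite /D_defined ltn_eqF // (qa_entry xQ xk).
rewrite (qa_entry yQ (qa_cell_on_diag yQ)).
have := @qa_top_row_mono k.+1 (y.1 + y.2 - 1).
by move: xk xQ yQ xy lt_xy; rewrite /on_diag /qa_cell /cell_le; lia.
Qed.

End QuasiArray.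

Section Reading.
Variables (m : nat) (Q : nat -> nat -> nat) (sigma : seq nat).
Hypotheses (Q_qa : is_quasi_array m Q) (sigma_comp : is_composition m sigma).
Variable c : nat * nat.
Hypothesis cL : c \in ribbon_cells sigma.

Local Notation L := (ribbon_cells sigma).
Local Notation R := (col_reading_cells sigma).
Local Notation q x := (Q x.1 x.2).
Local Notation w := (col_reading (pi_sigma sigma Q)).

Let memR : R =i L := mem_col_reading_cells sigma_comp.
Let R_uniq : uniq R := col_reading_cells_uniq sigma_comp.
Let index_R : {in L &, forall x y, (index x R < index y R) = read_before x y} :=
  index_col_reading_cells sigma_comp.

Lemma col_reading_subseq_pair a b : subseq [:: a; b] w <->
  exists x y : nat * nat, [/\ x \in L, y \in L, read_before x y, q x = a & q y = b].
Proof.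
rewrite /col_reading /= subseq_pair_map //.
split=> -[x [y [xR yR xy qx qy]]]; exists x, y; rewrite ?memR in xR yR *.
  by rewrite -index_R.
by rewrite index_R.
Qed.

Lemma col_reading_leftmost : index (q c) w = index c R <->
  {in L, forall y, read_before y c -> q y != q c}.
Proof.
rewrite /col_reading /= index_map_eq ?memR //.
split=> before_c y; rewrite ?memR => yL lt; apply: before_c; rewrite ?memR //.
  by rewrite index_R.
by rewrite -index_R.
Qed.

Lemma col_reading_rightmost :
  (size w).-1 - index (q c) (rev w) = index c R <->
  {in L, forall y, read_before c y -> q y != q c}.
Proof.
rewrite /col_reading /= last_index_map_eq ?memR //.
split=> after_c y; rewrite ?memR => yL lt; apply: after_c; rewrite ?memR //.
  by rewrite index_R.
by rewrite -index_R.
Qed.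

Lemma col_reading_update (g : nat -> nat -> nat) v :
  {in L, forall y, g y.1 y.2 = if y == c then v else q y} ->
  col_reading (pi_sigma sigma g) = set_nth 0 w (index c R) v.
Proof.
move=> gE; rewrite /col_reading /= set_nth_index_map ?memR //.
by apply/eq_in_map => y; rewrite memR; apply: gE.
Qed.

Variable k : nat.
Hypothesis ck : on_diag k c.1 c.2.

Let cQ : qa_cell m c := ribbon_cells_qa_cell sigma_comp cL.
Let c_diag : c.1 + c.2 = k.+1 := eqP ck.

Lemma ribbon_cells_on_diagE (y : nat * nat) : y \in L -> on_diag k y.1 y.2 = (y == c).
Proof.
move=> yL; apply/idP/eqP => [/eqP yk|->] //.
by apply: (ribbon_cells_diag_inj sigma_comp) => //; lia.
Qed.

Lemma ribbon_gap_C (y : nat * nat) : C_defined k Q -> y \in L ->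
  cell_le y c /\ q y + (c.1 - y.1) < q c \/ cell_le c y /\ q c + (y.1 - c.1) <= q y.
Proof.
move=> Ck yL; have yQ := ribbon_cells_qa_cell sigma_comp yL.
have [lt_yc|le_cy] := ltnP (y.1 + y.2) (c.1 + c.2).
  have yc : cell_le y c by rewrite (ribbon_cells_le sigma_comp) // ltnW.
  by left; split; last exact: (C_defined_gap Q_qa Ck ck cQ yQ yc lt_yc).
have cy : cell_le c y by rewrite (ribbon_cells_le sigma_comp).
by right; split; last exact: (qa_gap Q_qa yQ cQ cy).
Qed.

Lemma ribbon_gap_D (y : nat * nat) : D_defined m k Q -> y \in L ->
  cell_le y c /\ q y + (c.1 - y.1) <= q c \/ cell_le c y /\ q c + (y.1 - c.1) < q y.
Proof.
move=> Dk yL; have yQ := ribbon_cells_qa_cell sigma_comp yL.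
have [lt_cy|le_yc] := ltnP (c.1 + c.2) (y.1 + y.2).
  have cy : cell_le c y by rewrite (ribbon_cells_le sigma_comp) // ltnW.
  by right; split; last exact: (D_defined_gap Q_qa Dk ck cQ yQ cy lt_cy).
have yc : cell_le y c by rewrite (ribbon_cells_le sigma_comp).
by left; split; last exact: (qa_gap Q_qa cQ yQ yc).
Qed.

Lemma C_defined_reading : C_defined k Q <-> [/\ 1 < q c,
  ~ (exists x y : nat * nat,
       [/\ x \in L, y \in L, read_before x y, q x = q c & q y = (q c).-1])
  & {in L, forall y, read_before y c -> q y != q c}].
Proof.
have qc_gt0 := qa_entry_gt0 Q_qa cQ.
have k_gt0 : 0 < k by move: cQ; rewrite /qa_cell; lia.
split=> [Ck | [qc_gt1 no_pair first_c]].
  have split_y := ribbon_gap_C Ck; split.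
  - have [k1|k_neq1] := eqVneq k 1.
      by move: Ck; rewrite /C_defined (qa_entry Q_qa cQ ck) k1 /=; lia.
    have [y yL /eqP yk] : exists2 y : nat * nat, y \in L & on_diag k.-1 y.1 y.2.
      by apply: (ribbon_cells_on_diag sigma_comp); move: cQ; rewrite /qa_cell; lia.
    have := split_y y yL; have := qa_entry_gt0 Q_qa (ribbon_cells_qa_cell sigma_comp yL).
    by rewrite /cell_le; lia.
  - move=> [x [y [xL yL xy qx qy]]]; have := split_y x xL; have := split_y y yL.
    by move: xy; rewrite /read_before /cell_le; lia.
  - move=> y yL yc; apply/eqP => qy; have := split_y y yL.
    by move: yc; rewrite /read_before /cell_le; lia.
rewrite /C_defined; have [k1|k_neq1] := eqVneq k 1.
  by move: qc_gt1 cQ; rewrite (qa_entry Q_qa cQ ck) k1 /qa_cell /=; lia.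
have [y yL yk] : exists2 y : nat * nat, y \in L & on_diag k.-1 y.1 y.2.
  by apply: (ribbon_cells_on_diag sigma_comp); move: cQ; rewrite /qa_cell; lia.
have yQ := ribbon_cells_qa_cell sigma_comp yL.
have y_diag : y.1 + y.2 = k by move/eqP: yk; lia.
have yc : cell_le y c by rewrite (ribbon_cells_le sigma_comp) //; lia.
have top_le : Q 1 k.-1 <= Q 1 k.
  by apply: (qa_top_row_mono Q_qa); move: cQ; rewrite /qa_cell; lia.
rewrite ltn_neqAle top_le andbT; apply/eqP => top_eq.
move: (qa_entry Q_qa yQ yk) (qa_entry Q_qa cQ ck); rewrite top_eq => qyE qcE.
have [y1|y1] : y.1 = c.1 \/ y.1 = c.1.-1 by move: yc; rewrite /cell_le; lia.
  have yc' : read_before y c by rewrite /read_before; lia.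
  by move: (first_c y yL yc'); rewrite qyE qcE y1 eqxx.
apply: no_pair; exists c, y; split=> //.
  by move: cQ; rewrite /read_before /qa_cell; lia.
by move: yQ; rewrite qyE qcE y1 /qa_cell; lia.
Qed.

Lemma D_defined_reading : D_defined m k Q <->
  ~ (exists x y : nat * nat,
       [/\ x \in L, y \in L, read_before x y, q x = (q c).+1 & q y = q c])
  /\ {in L, forall y, read_before c y -> q y != q c}.
Proof.
split=> [Dk | [no_pair last_c]].
  have split_y := ribbon_gap_D Dk; split.
  - move=> [x [y [xL yL xy qx qy]]]; have := split_y x xL; have := split_y y yL.
    by move: xy; rewrite /read_before /cell_le; lia.
  - move=> y yL cy; apply/eqP => qy; have := split_y y yL.
    by move: cy; rewrite /read_before /cell_le; lia.
rewrite /D_defined; have [//|k_neq_m] := eqVneq k m.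
have [y yL yk] : exists2 y : nat * nat, y \in L & on_diag k.+1 y.1 y.2.
  by apply: (ribbon_cells_on_diag sigma_comp); move: cQ; rewrite /qa_cell; lia.
have yQ := ribbon_cells_qa_cell sigma_comp yL.
have y_diag : y.1 + y.2 = k.+2 := eqP yk.
have cy : cell_le c y by rewrite (ribbon_cells_le sigma_comp) //; lia.
have top_le : Q 1 k <= Q 1 k.+1.
  by apply: (qa_top_row_mono Q_qa); move: cQ yQ; rewrite /qa_cell; lia.
rewrite ltn_neqAle top_le andbT; apply/eqP => top_eq.
move: (qa_entry Q_qa yQ yk) (qa_entry Q_qa cQ ck); rewrite -top_eq => qyE qcE.
have [y1|y1] : y.1 = c.1 \/ y.1 = c.1.+1 by move: cy; rewrite /cell_le; lia.
  have cy' : read_before c y by rewrite /read_before; lia.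
  by move: (last_c y yL cy'); rewrite qyE qcE y1 eqxx.
apply: no_pair; exists y, c; split=> //; first by rewrite /read_before; lia.
by move: cQ; rewrite qyE qcE y1 /qa_cell; lia.
Qed.

Let qc_gt0 : 0 < q c := qa_entry_gt0 Q_qa cQ.

Let qc_in_w : q c \in w.
Proof. by apply: (map_f (fun x : nat * nat => Q x.1 x.2)); rewrite memR. Qed.

Lemma e_op_col_reading :
  (C_defined k Q <-> is_some (e_op (q c).-1 w) /\ e_pos (q c).-1 w = index c R) /\
  (C_defined k Q -> e_op (q c).-1 w = Some (col_reading (pi_sigma sigma (C_op k Q)))).
Proof.
have C_upd : col_reading (pi_sigma sigma (C_op k Q)) = set_nth 0 w (index c R) (q c).-1.
  apply: col_reading_update => y yL; rewrite /C_op ribbon_cells_on_diagE //.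
  by case: eqVneq => [->|]; rewrite ?subn1.
have C_iff : C_defined k Q <->
    [/\ (q c).-1 != 0, ~~ qk_blocked (q c).-1 w & e_pos (q c).-1 w = index c R].
  rewrite /qk_blocked /e_pos prednK //; split.
    case/C_defined_reading => qc_gt1 no_pair first_c; split; first by lia.
      by apply/negP => /col_reading_subseq_pair.
    exact/col_reading_leftmost.
  case=> qc_neq1 /negP not_blocked pos_c; apply/C_defined_reading; split; first by lia.
    by move/col_reading_subseq_pair.
  exact/col_reading_leftmost.
rewrite /e_op prednK // qc_in_w /= orbF C_upd.
case: ifP => [blocked|/norP[qc_neq1 not_blocked]].
  have notC : ~ C_defined k Q.
    by case/C_iff => /negbTE qc1 /negbTE nb _; rewrite qc1 nb in blocked.
  by split; [split=> [/notC|[]] | move/notC].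
split; first by split=> [/C_iff[_ _ ->]|[_ pos_c]]; last exact/C_iff.
by case/C_iff => _ _ ->.
Qed.

Lemma f_op_col_reading :
  (D_defined m k Q <-> is_some (f_op (q c) w) /\ f_pos (q c) w = index c R) /\
  (D_defined m k Q -> f_op (q c) w = Some (col_reading (pi_sigma sigma (D_op k Q)))).
Proof.
have D_upd : col_reading (pi_sigma sigma (D_op k Q)) = set_nth 0 w (index c R) (q c).+1.
  apply: col_reading_update => y yL; rewrite /D_op ribbon_cells_on_diagE //.
  by case: eqVneq => [->|]; rewrite ?addn1.
have D_iff : D_defined m k Q <-> ~~ qk_blocked (q c) w /\ f_pos (q c) w = index c R.
  rewrite /qk_blocked /f_pos; split.
    case/D_defined_reading => no_pair last_c; split; last exact/col_reading_rightmost.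
    by apply/negP => /col_reading_subseq_pair.
  case=> /negP not_blocked pos_c; apply/D_defined_reading; split.
    by move/col_reading_subseq_pair.
  exact/col_reading_rightmost.
rewrite /f_op qc_in_w (gtn_eqF qc_gt0) /= orbF D_upd.
case: ifP => [blocked|/negbT not_blocked].
  have notD : ~ D_defined m k Q by case/D_iff => /negbTE nb _; rewrite nb in blocked.
  by split; [split=> [/notD|[]] | move/notD].
split; first by split=> [/D_iff[_ ->]|[_ pos_c]]; last exact/D_iff.
by case/D_iff => _ ->.
Qed.

End Reading.

Theorem proposition3p8 (m : nat) (Q : nat -> nat -> nat) (sigma : seq nat)
    (k : nat) (c : nat * nat) (l : nat) :
  is_quasi_array m Q ->
  is_composition m sigma ->
  1 <= k <= m ->
  c \in ribbon_cells sigma ->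
  on_diag k c.1 c.2 ->
  l = Q c.1 c.2 ->
  let T := pi_sigma sigma Q in
  let w := col_reading T in
  let p := index c (col_reading_cells sigma) in
  ((C_defined k Q <-> is_some (e_op l.-1 w) /\ e_pos l.-1 w = p) /\
   (C_defined k Q -> e_op l.-1 w = Some (col_reading (pi_sigma sigma (C_op k Q)))))
  /\
  ((D_defined m k Q <-> is_some (f_op l w) /\ f_pos l w = p) /\
   (D_defined m k Q -> f_op l w = Some (col_reading (pi_sigma sigma (D_op k Q))))).
Proof.
(* [1 <= k <= m] follows from [c] being a ribbon cell on the [k]-th diagonal. *)
move=> Q_qa sigma_comp _ cL ck -> T w p.
split; first exact: (e_op_col_reading Q_qa sigma_comp cL ck).
exact: (f_op_col_reading Q_qa sigma_comp cL ck).
Qed.
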